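(* Let $\mathcal{A},\mathcal{A}'$ be abelian categories with amplitudes $\alpha,\alpha'$, and let $F\colon\mathcal{A}\to\mathcal{A}'$ be an additive functor for which there exists $K\ge0$ such that $\mathrm{d}_{\alpha'}(F(A),F(B))\le K\,\mathrm{d}_\alpha(A,B)$ for all $A,B\in\operatorname{ob}\mathcal{A}$. Then $\alpha'(F(A))\le K\alpha(A)$ for all $A\in\operatorname{ob}\mathcal{A}$.
   Context: An amplitude on an abelian category $\mathcal{A}$ is a function $\alpha\colon\operatorname{ob}\mathcal{A}\to[0,\infty]$ with $\alpha(0)=0$ such that for every short exact sequence $0\to A\to B\to C\to0$, $\alpha(A)\le\alpha(B)$, $\alpha(C)\le\alpha(B)$ and $\alpha(B)\le\alpha(A)+\alpha(C)$. The path metric $\mathrm{d}_\alpha(A,B)$ is the infimum, over zigzags $A\xleftarrow{\gamma_1}C_1\xrightarrow{\gamma_2}\cdots\xrightarrow{\gamma_n}B$, of $\sum_i\alpha(\ker\gamma_i)+\alpha(\operatorname{coker}\gamma_i)$ ($\inf\emptyset=\infty$). *)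

From HB Require Import structures.
From mathcomp Require Import all_boot all_order all_algebra.
From mathcomp Require Import boolp classical_sets reals constructive_ereal ereal.
Set Implicit Arguments. Unset Strict Implicit. Unset Printing Implicit Defensive.
Import Order.TTheory GRing.Theory Num.Theory.
Local Open Scope ring_scope.

(* comp g f is "g after f".                                            *)

Record precat := PreCat {
  Obj : Type;
  Hom : Obj -> Obj -> zmodType;
  idm : forall A, Hom A A;
  comp : forall A B C, Hom B C -> Hom A B -> Hom A C;
  compA : forall A B C D (h : Hom C D) (g : Hom B C) (f : Hom A B),
      comp h (comp g f) = comp (comp h g) f;
  comp1m : forall A B (f : Hom A B), comp (idm B) f = f;
  compm1 : forall A B (f : Hom A B), comp f (idm A) = f;
  compDl : forall A B C (g1 g2 : Hom B C) (f : Hom A B),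
      comp (g1 + g2) f = comp g1 f + comp g2 f;
  compDr : forall A B C (g : Hom B C) (f1 f2 : Hom A B),
      comp g (f1 + f2) = comp g f1 + comp g f2
}.
Arguments comp {p A B C}.
Arguments idm {p}.

Section CatDefs.
Variable C : precat.

Definition is_kernel (A B K : Obj C) (g : Hom A B) (k : Hom K A) : Prop :=
  comp g k = 0 /\
  forall X (h : Hom X A), comp g h = 0 ->
    exists u : Hom X K, comp k u = h /\ forall v : Hom X K, comp k v = h -> v = u.

Definition is_cokernel (A B Q : Obj C) (f : Hom A B) (q : Hom B Q) : Prop :=
  comp q f = 0 /\
  forall X (h : Hom B X), comp h f = 0 ->
    exists u : Hom Q X, comp u q = h /\ forall v : Hom Q X, comp v q = h -> v = u.

Definition mono (A B : Obj C) (f : Hom A B) : Prop :=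
  forall X (u v : Hom X A), comp f u = comp f v -> u = v.

Definition epi (A B : Obj C) (f : Hom A B) : Prop :=
  forall X (u v : Hom B X), comp u f = comp v f -> u = v.

Definition is_zero_obj (Z : Obj C) : Prop :=
  (forall X (f g : Hom Z X), f = g) /\ (forall X (f g : Hom X Z), f = g).

Definition is_biproduct (A B P : Obj C) (i1 : Hom A P) (i2 : Hom B P)
  (p1 : Hom P A) (p2 : Hom P B) : Prop :=
  [/\ comp p1 i1 = idm A, comp p2 i2 = idm B, comp p1 i2 = 0, comp p2 i1 = 0
    & comp i1 p1 + comp i2 p2 = idm P].

End CatDefs.

(* Kernels/cokernels are given as data (chosen). *)
Record abcat := AbCat {
  ab_cat :> precat;
  zero_obj : Obj ab_cat;
  zero_objP : is_zero_obj zero_obj;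
  biprodP : forall A B : Obj ab_cat, exists (P : Obj ab_cat) (i1 : Hom A P)
      (i2 : Hom B P) (p1 : Hom P A) (p2 : Hom P B), is_biproduct i1 i2 p1 p2;
  ker : forall A B : Obj ab_cat, Hom A B -> Obj ab_cat;
  kerm : forall A B (f : Hom A B), Hom (ker f) A;
  kermP : forall A B (f : Hom A B), is_kernel f (kerm f);
  coker : forall A B : Obj ab_cat, Hom A B -> Obj ab_cat;
  cokerm : forall A B (f : Hom A B), Hom B (coker f);
  cokermP : forall A B (f : Hom A B), is_cokernel f (cokerm f);
  mono_kernel : forall A B (f : Hom A B), mono f -> is_kernel (cokerm f) f;
  epi_cokernel : forall A B (f : Hom A B), epi f -> is_cokernel (kerm f) f
}.
Arguments ker {a A B}.
Arguments coker {a A B}.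

Definition short_exact (C : abcat) (A B D : Obj C) : Prop :=
  exists (f : Hom A B) (g : Hom B D), is_kernel g f /\ is_cokernel f g.

Record additive_functor (C C' : abcat) := AddFunctor {
  fobj :> Obj C -> Obj C';
  fhom : forall A B, Hom A B -> Hom (fobj A) (fobj B);
  fhom_id : forall A, fhom (idm A) = idm (fobj A);
  fhom_comp : forall A B D (g : Hom B D) (f : Hom A B),
      fhom (comp g f) = comp (fhom g) (fhom f);
  fhom_add : forall A B (f g : Hom A B), fhom (f + g) = fhom f + fhom g
}.

Local Open Scope ereal_scope.

Definition is_amplitude (R : realType) (C : abcat) (al : Obj C -> \bar R) : Prop :=
  [/\ forall A, 0 <= al A,
      al (zero_obj C) = 0
    & forall A B D : Obj C, short_exact A B D ->
        [/\ al A <= al B, al D <= al B & al B <= al A + al D]].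

Inductive zigzag (C : abcat) : Obj C -> Obj C -> Type :=
| zz_nil : forall A, zigzag A A
| zz_fwd : forall A D B, Hom A D -> zigzag D B -> zigzag A B
| zz_bwd : forall A D B, Hom D A -> zigzag D B -> zigzag A B.

Fixpoint zz_cost (R : realType) (C : abcat) (al : Obj C -> \bar R)
  (A B : Obj C) (z : zigzag A B) : \bar R :=
  match z with
  | zz_nil _ => 0
  | zz_fwd _ _ _ g z' => al (ker g) + al (coker g) + zz_cost al z'
  | zz_bwd _ _ _ g z' => al (ker g) + al (coker g) + zz_cost al z'
  end.

(* Path metric: infimum of costs (inf of empty set is +oo) *)
Definition path_dist (R : realType) (C : abcat) (al : Obj C -> \bar R)
  (A B : Obj C) : \bar R :=
  ereal_inf [set x | exists z : zigzag A B, x = zz_cost al z].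

(* Every arrow g : A -> D factors through its image I = ker (coker g), giving
   short exact sequences ker g -> A -> I and I -> D -> coker g.  Hence an
   amplitude changes along g by at most the cost α(ker g) + α(coker g), so
   α(X) <= cost(z) + α(Y) for every zigzag z from X to Y; taking Y = 0 and the
   one-arrow zigzag X -> 0 shows d_α(X, 0) = α(X).  An additive functor sends 0
   to an object with zero identity, so α'(F A) <= d_α'(F A, F 0)
   <= K d_α(A, 0) = K α(A). *)
From Pilot Require Import Defs.
From mathcomp Require Import all_boot all_order all_algebra.
From mathcomp Require Import boolp classical_sets reals constructive_ereal ereal.
Set Implicit Arguments. Unset Strict Implicit. Unset Printing Implicit Defensive.
Import Order.TTheory GRing.Theory Num.Theory.
(* Otherwise [Hom] would refer to the linear maps of vector.v. *)
Import Defs.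
Local Open Scope ring_scope.

Section Preadditive.
Variable C : precat.

Lemma comp0m (A B D : Obj C) (f : Hom A B) : comp (0 : Hom B D) f = 0.
Proof. by apply: (addrI (comp 0 f)); rewrite -compDl !addr0. Qed.

Lemma compm0 (A B D : Obj C) (g : Hom B D) : comp g (0 : Hom A B) = 0.
Proof. by apply: (addrI (comp g 0)); rewrite -compDr !addr0. Qed.

Lemma compBl (A B D : Obj C) (u v : Hom B D) (f : Hom A B) :
  comp (u - v) f = comp u f - comp v f.
Proof. by apply: (addIr (comp v f)); rewrite -compDl !subrK. Qed.

Lemma is_kernel_mono (A B K : Obj C) (g : Hom A B) (k : Hom K A) :
  is_kernel g k -> mono k.
Proof.
move=> [gk0 kU] X u v kuv.
have gku0 : comp g (comp k u) = 0 by rewrite compA gk0 comp0m.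
have [w [_ uniq_w]] := kU X _ gku0.
by rewrite (uniq_w u erefl) (uniq_w v (esym kuv)).
Qed.

Lemma mono_comp (A B D : Obj C) (g : Hom B D) (f : Hom A B) :
  mono g -> mono f -> mono (comp g f).
Proof. by move=> mg mf X u v; rewrite -!compA => /mg /mf. Qed.

Lemma zero_cancel_epi (A B : Obj C) (e : Hom A B) :
  (forall X (w : Hom B X), comp w e = 0 -> w = 0) -> epi e.
Proof.
move=> e0 X u v uv; apply/eqP; rewrite -subr_eq0; apply/eqP/e0.
by rewrite compBl uv subrr.
Qed.

End Preadditive.

Lemma fhom0 (C C' : abcat) (F : additive_functor C C') (A B : Obj C) :
  fhom F (0 : Hom A B) = 0.
Proof. by apply: (addrI (fhom F 0)); rewrite -fhom_add !addr0. Qed.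

Lemma idm_zero_obj (C : abcat) : idm (zero_obj C) = 0.
Proof. exact: (proj1 (zero_objP C)). Qed.

Section Image.
Variable C : abcat.

Variables (A D : Obj C) (g : Hom A D).

Definition img : Obj C := ker (cokerm g).

Let i : Hom img D := kerm (cokerm g).

Lemma image_factor : exists e : Hom A img, comp i e = g.
Proof.
have [_ iU] := kermP (cokerm g).
by have [e [ie _]] := iU A g (proj1 (cokermP g)); exists e.
Qed.

(* If w e = 0 and k = ker w, then i k is mono, hence the kernel of its
   cokernel c; as c g = 0, also c i = 0, so i factors through i k, making k
   split epi and forcing w = 0. *)
Lemma image_factor_epi (e : Hom A img) : comp i e = g -> epi e.
Proof.
move=> ie; have [_ qU] := cokermP g.
have mi : mono i := is_kernel_mono (kermP (cokerm g)).
apply: zero_cancel_epi => X w we0.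
have [wk0 kU] := kermP w; set k := kerm w.
have [e' [ke' _]] := kU _ e we0.
have [cik0 ikU] := mono_kernel (mono_comp mi (is_kernel_mono (kermP w))).
set c := cokerm (comp i k) in cik0 ikU.
have cg0 : comp c g = 0 by rewrite -ie -ke' (compA i) compA cik0 comp0m.
have [c' [c'q _]] := qU _ c cg0.
have ci0 : comp c i = 0 by rewrite -c'q -compA (proj1 (kermP _)) compm0.
have [t [ikt _]] := ikU _ i ci0.
have kt : comp k t = idm _ by apply: mi; rewrite compA ikt compm1.
by rewrite -(compm1 w) -kt compA wk0 comp0m.
Qed.

Lemma short_exact_ker_image : short_exact (ker g) A img.
Proof.
have [e ie] := image_factor; have epe := image_factor_epi ie.
have mi : mono i := is_kernel_mono (kermP (cokerm g)).
have [gk0 kU] := kermP g.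
have ek0 : comp e (kerm g) = 0 by apply: mi; rewrite compA ie gk0 compm0.
exists (kerm g), e; split.
  split=> // X h eh0; apply: kU.
  by rewrite -ie -compA eh0 compm0.
split=> // X h hk0.
have [_ keU] := epi_cokernel epe.
have gke0 : comp g (kerm e) = 0 by rewrite -ie -compA (proj1 (kermP e)) compm0.
have [u [ku _]] := kU _ _ gke0.
have hke0 : comp h (kerm e) = 0 by rewrite -ku compA hk0 comp0m.
have [v [ve _]] := keU X h hke0.
by exists v; split=> // v' v'e; apply: epe; rewrite v'e ve.
Qed.

Lemma short_exact_image_coker : short_exact img D (coker g).
Proof.
have [e ie] := image_factor; have [_ qU] := cokermP g.
exists i, (cokerm g); split; first exact: kermP.
split; first exact: (proj1 (kermP _)).
by move=> X h hi0; apply: qU; rewrite -ie compA hi0 comp0m.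
Qed.

End Image.

Local Open Scope ereal_scope.

Section Amplitude.
Variables (R : realType) (C : abcat) (al : Obj C -> \bar R).
Hypothesis hal : is_amplitude al.

Let al_ge0 (A : Obj C) : 0 <= al A. Proof. by case: hal. Qed.

Let al_ses (A B D : Obj C) : short_exact A B D ->
  [/\ al A <= al B, al D <= al B & al B <= al A + al D].
Proof. by case: hal => _ _; apply. Qed.

Lemma amp_idm0 (Y : Obj C) : idm Y = 0%R -> al Y = 0.
Proof.
move=> Y0; apply/eqP; rewrite eq_le al_ge0 andbT.
have [_ Z0 _] := hal; rewrite -Z0.
have [_ to_zero_uniq] := zero_objP C.
suff /al_ses[] : short_exact Y (zero_obj C) (zero_obj C) by [].
exists 0%R, (idm (zero_obj C)); split; split; rewrite ?comp1m //.
- move=> X h _; exists 0%R; split; first by rewrite compm0; apply: to_zero_uniq.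
  by move=> v _; rewrite -(comp1m v) Y0 comp0m.
- by move=> X h _; exists h; split=> [|v]; rewrite compm1.
Qed.

Variables (A D : Obj C) (g : Hom A D).

Lemma amp_ker_le : al (ker g) <= al A.
Proof. by have [] := al_ses (short_exact_ker_image g). Qed.

Lemma amp_coker_le : al (coker g) <= al D.
Proof. by have [] := al_ses (short_exact_image_coker g). Qed.

Lemma amp_dom_le : al A <= al (ker g) + al D.
Proof.
have [_ _ le_A] := al_ses (short_exact_ker_image g).
have [le_I _ _] := al_ses (short_exact_image_coker g).
by apply: le_trans le_A _; apply: leeD2l.
Qed.

Lemma amp_codom_le : al D <= al A + al (coker g).
Proof.
have [_ le_I _] := al_ses (short_exact_ker_image g).
have [_ _ le_D] := al_ses (short_exact_image_coker g).
by apply: le_trans le_D _; apply: leeD2r.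
Qed.

End Amplitude.

Section PathDistance.
Variables (R : realType) (C : abcat) (al : Obj C -> \bar R).
Hypothesis hal : is_amplitude al.

Lemma amp_le_zz_cost (X Y : Obj C) (z : zigzag X Y) :
  al X <= zz_cost al z + al Y.
Proof.
have al_ge0 (A : Obj C) : 0 <= al A by case: hal.
elim: z => [A | A D B g z IH | A D B g z IH] /=; first by rewrite add0e.
- apply: le_trans (amp_dom_le hal g) _; rewrite -!addeA leeD2l //.
  exact: le_trans IH (leeDr _ (al_ge0 _)).
- apply: le_trans (amp_codom_le hal g) _.
  rewrite (addeC (al D)) (addeC (al (ker g))) -!addeA leeD2l //.
  exact: le_trans IH (leeDr _ (al_ge0 _)).
Qed.

Lemma amp_le_path_dist_idm0 (X Y : Obj C) :
  idm Y = 0%R -> al X <= path_dist al X Y.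
Proof.
move=> Y0; apply/ereal_infP => _ [z ->].
by rewrite -[leRHS]adde0 -(amp_idm0 hal Y0) amp_le_zz_cost.
Qed.

Lemma path_dist_zero_obj (X : Obj C) : path_dist al X (zero_obj C) = al X.
Proof.
have [_ Z0 _] := hal; apply/eqP.
rewrite eq_le amp_le_path_dist_idm0 ?idm_zero_obj // andbT.
set g := (0%R : Hom X (zero_obj C)).
have one_arrow :
    path_dist al X (zero_obj C) <= zz_cost al (zz_fwd g (zz_nil _)).
  by apply: ereal_inf_lbound; exists (zz_fwd g (zz_nil _)).
apply: le_trans one_arrow _; rewrite /= adde0 -[leRHS]adde0 -Z0.
exact: leeD (amp_ker_le hal g) (amp_coker_le hal g).
Qed.

End PathDistance.

Theorem mainTheorem9 (R : realType) (C C' : abcat)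
  (al : Obj C -> \bar R) (al' : Obj C' -> \bar R)
  (hal : is_amplitude al) (hal' : is_amplitude al')
  (F : additive_functor C C') (K : R) :
  (0 <= K)%R ->
  (forall A B : Obj C,
     (path_dist al' (F A) (F B) <= K%:E * path_dist al A B)%E) ->
  forall A : Obj C, (al' (F A) <= K%:E * al A)%E.
Proof.
move=> _ F_lip A.
have F0 : idm (F (zero_obj C)) = 0%R by rewrite -fhom_id idm_zero_obj fhom0.
apply: le_trans (amp_le_path_dist_idm0 hal' (F A) F0) _.
by rewrite -(path_dist_zero_obj hal A) F_lip.
Qed.
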